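(* Let $h$ be a penalty function on $\Delta$ and let $p$ lie in the relative interior of $\Delta$. If $F_h(p,y_j)$ is bounded for a sequence $y_j\in\mathbb{R}^n$, then $y_{j,\alpha}-y_{j,\beta}$ is bounded for all $\alpha,\beta\in\{1,\dots,n\}$.
   Context: $\Delta$ is the unit simplex of $\mathbb{R}^n$. A penalty function on $\Delta$ is $h:\Delta\to\mathbb{R}$, continuous, $C^\infty$ on the relative interior of every face of $\Delta$, and strongly convex: $h(tx_1+(1-t)x_2)\le th(x_1)+(1-t)h(x_2)-\tfrac12Kt(1-t)\|x_1-x_2\|^2$ for some $K>0$. $h^*(y)=\max_{x\in\Delta}\{\langle y,x\rangle-h(x)\}$; Fenchel coupling $F_h(p,y)=h(p)+h^*(y)-\langle y,p\rangle$. *)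

(* vectors of R^n are row vectors 'rV[R]_n,
   coordinate i of x is  x ord0 i. *)
From HB Require Import structures.
From mathcomp Require Import all_boot all_order all_algebra.
From mathcomp Require Import all_classical all_reals all_analysis.
Set Implicit Arguments. Unset Strict Implicit. Unset Printing Implicit Defensive.
Import Order.TTheory GRing.Theory Num.Theory.
Import numFieldNormedType.Exports.
Local Open Scope classical_set_scope.
Local Open Scope ring_scope.

Section Simplex.
Variables (R : realType) (n : nat).
Notation V := 'rV[R]_n.

Definition dotp (y x : V) : R := \sum_(i < n) y ord0 i * x ord0 i.
Definition sqnorm (x : V) : R := \sum_(i < n) (x ord0 i) ^+ 2.

Definition simplex : set V :=
  [set x | (forall i, 0 <= x ord0 i) /\ \sum_(i < n) x ord0 i = 1].

Definition simplex_ri : set V :=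
  [set x | (forall i, 0 < x ord0 i) /\ \sum_(i < n) x ord0 i = 1].

(* relative interior of the face of the simplex spanned by the vertices e_i, i in S *)
Definition face_ri (S : {set 'I_n}) : set V :=
  [set x | simplex x /\ forall i, (0 < x ord0 i) = (i \in S)].

Definition face_dir (S : {set 'I_n}) : set V :=
  [set v | (forall i, i \notin S -> v ord0 i = 0) /\ \sum_(i < n) v ord0 i = 0].

Definition cont_on (U : set V) (f : V -> R) : Prop :=
  forall x, U x -> f @ within U (nbhs x) --> f x.

(* C^k on the relatively open set U of an affine subspace with direction space T:
   all iterated directional derivatives along T of order <= k exist on U and are
   continuous on U *)
Fixpoint smooth_k (k : nat) (U T : set V) (f : V -> R) : Prop :=
  match k with
  | 0 => cont_on U f
  | k.+1 => cont_on U f /\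
      forall v, T v -> (forall x, U x -> derivable f x v) /\
                       smooth_k k U T (fun x => 'D_v f x)
  end.

Definition smooth_on (U T : set V) (f : V -> R) : Prop :=
  forall k, smooth_k k U T f.

(* penalty function on the simplex (only the values on the simplex matter) *)
Definition penalty (h : V -> R) : Prop :=
  cont_on simplex h /\
  (forall S : {set 'I_n}, smooth_on (face_ri S) (face_dir S) h) /\
  exists K : R, 0 < K /\
    forall x1 x2 t, simplex x1 -> simplex x2 -> 0 <= t <= 1 ->
      h (t *: x1 + (1 - t) *: x2) <=
        t * h x1 + (1 - t) * h x2 - 2^-1 * K * t * (1 - t) * sqnorm (x1 - x2).

(* convex conjugate: h*(y) = max_{x in simplex} <y,x> - h(x) (written as a sup;
   the max is attained for continuous h) *)
Definition hstar (h : V -> R) (y : V) : R :=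
  sup [set r | exists2 x, simplex x & r = dotp y x - h x].

Definition fenchel (h : V -> R) (p y : V) : R := h p + hstar h y - dotp y p.

End Simplex.

From HB Require Import structures.
From mathcomp Require Import all_boot all_order all_algebra.
From mathcomp Require Import all_classical all_reals all_analysis.
From mathcomp Require Import lra.
Set Implicit Arguments. Unset Strict Implicit. Unset Printing Implicit Defensive.
Import Order.TTheory GRing.Theory Num.Theory.
Import numFieldNormedType.Exports.
Local Open Scope classical_set_scope.
Local Open Scope ring_scope.

(* Only the continuity of h is needed: h is bounded on the compact simplex, so
   h* is finite and, for every x in the simplex, F_h(p,y) >= <y, x - p> - 2 sup|h|.
   Moving p along the edge direction e_a - e_b by p_b stays in the simplex and
   gives p_b (y_a - y_b) <= F_h(p,y) + 2 sup|h|; exchanging a and b bounds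
   |y_a - y_b|. *)

Section SimplexBounds.
Variables (R : realType) (n : nat).
Notation V := 'rV[R]_n.

Lemma continuous_coord_sum (r : seq 'I_n) :
  continuous (fun v : V => \sum_(i <- r) v ord0 i).
Proof.
elim: r => [|i r IHr].
  under eq_fun do rewrite big_nil; exact: cst_continuous.
under eq_fun do rewrite big_cons.
by move=> x; apply: continuousD; [exact: coord_continuous | exact: IHr].
Qed.

Lemma simplex_coord_le1 (x : V) i : simplex x -> x ord0 i <= 1.
Proof. by move=> [x_ge0 <-]; rewrite (bigD1 i) //= lerDl sumr_ge0. Qed.

Lemma simplex_ri_simplex (p : V) : simplex_ri p -> simplex p.
Proof. by move=> [p_gt0 p_sum]; split => // i; exact: ltW. Qed.

Lemma simplex_compact : compact (@simplex R n).
Proof.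
have -> : @simplex R n =
    [set v : V | forall i, `[0, 1]%classic (v ord0 i)] `&`
    ((fun v : V => \sum_(i < n) v ord0 i) @^-1` [set 1]).
  apply/seteqP; split => v /=.
    move=> sv; split; last by case: sv.
    by move=> i; rewrite in_itv /= simplex_coord_le1 // andbT; case: sv.
  by move=> [v01 v_sum]; split => // i; have := v01 i; rewrite in_itv /= => /andP[].
apply: compact_closedI.
  by apply: (@rV_compact R n (fun=> `[0, 1]%classic)) => i; exact: segment_compact.
by apply: preimage_closed; [move=> x _; exact: continuous_coord_sum | exact: closed_eq].
Qed.

Lemma bounded_on_simplex (f : V -> R) :
  cont_on (@simplex R n) f -> exists B, forall x, simplex x -> `|f x| <= B.
Proof.
move=> f_cont.
have /compact_bounded [M [_ fM]] : compact (f @` @simplex R n).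
  by apply: continuous_compact simplex_compact; apply/subspace_continuousP.
exists (`|M| + 1) => x sx; apply: fM; last by exists x.
by rewrite (le_lt_trans (ler_norm M)) // ltrDl.
Qed.

Lemma dotp_le_sum_norm (y x : V) : simplex x -> dotp y x <= \sum_(i < n) `|y ord0 i|.
Proof.
move=> sx; rewrite /dotp; apply: ler_sum => i _; apply: le_trans (ler_norm _) _.
by rewrite normrM (ger0_norm (sx.1 i)) ler_piMr // simplex_coord_le1.
Qed.

Lemma hstar_ge (h : V -> R) B (y x : V) :
  (forall z, simplex z -> B <= h z) -> simplex x -> dotp y x - h x <= hstar h y.
Proof.
move=> hB sx; apply: sup_upper_bound; last by exists x.
split; first by exists (dotp y x - h x), x.
exists (\sum_(i < n) `|y ord0 i| - B) => _ [z sz ->].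
by apply: lerD; [exact: dotp_le_sum_norm | rewrite lerN2 hB].
Qed.

Definition edge_dir (a b : 'I_n) : V := \row_i ((i == a)%:R - (i == b)%:R).

Lemma sum_mul_indicator (f : 'I_n -> R) a : \sum_(i < n) f i * (i == a)%:R = f a.
Proof.
rewrite (bigD1 a) //= eqxx mulr1 big1 ?addr0 // => i /negbTE ->.
by rewrite mulr0.
Qed.

Lemma dotp_add_edge (y p : V) a b s :
  dotp y (p + s *: edge_dir a b) = dotp y p + s * (y ord0 a - y ord0 b).
Proof.
rewrite /dotp; under eq_bigr do rewrite !mxE mulrDr.
rewrite big_split /=; congr (_ + _).
under eq_bigr do rewrite mulrCA mulrBr.
by rewrite -mulr_sumr sumrB !sum_mul_indicator.
Qed.

Lemma simplex_ri_add_edge (p : V) a b :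
  simplex_ri p -> simplex (p + p ord0 b *: edge_dir a b).
Proof.
move=> [p_gt0 p_sum]; split.
  move=> i; rewrite !mxE; have p_ge0 j : 0 <= p ord0 j by exact: ltW.
  have [->|ib] := eqVneq i b; last by rewrite subr0 addr_ge0 ?mulr_ge0.
  by rewrite mulrBr mulr1 addrCA subrr addr0 mulr_ge0.
under eq_bigr do rewrite !mxE.
rewrite big_split /= p_sum -mulr_sumr.
under eq_bigr do rewrite -[X in X - _]mul1r -[X in _ - X]mul1r.
by rewrite sumrB !sum_mul_indicator subrr mulr0 addr0.
Qed.

Lemma coord_diff_le_fenchel (h : V -> R) B (p y : V) a b :
  (forall x, simplex x -> `|h x| <= B) -> simplex_ri p ->
  p ord0 b * (y ord0 a - y ord0 b) <= fenchel h p y + 2 * B.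
Proof.
move=> hB sp; set x := p + p ord0 b *: edge_dir a b.
have sx : simplex x by exact: simplex_ri_add_edge.
have h_ge z : simplex z -> - B <= h z by move/hB; rewrite ler_norml => /andP[].
have := hstar_ge y h_ge sx; rewrite dotp_add_edge /fenchel.
have := hB _ sx; have := hB _ (simplex_ri_simplex sp).
by rewrite !ler_norml => /andP[? ?] /andP[? ?]; lra.
Qed.

End SimplexBounds.

Theorem propositionC5 (R : realType) (n : nat) (h : 'rV[R]_n -> R)
  (p : 'rV[R]_n) (y : nat -> 'rV[R]_n) :
  penalty h -> simplex_ri p ->
  (exists M : R, forall j, `|fenchel h p (y j)| <= M) ->
  forall a b : 'I_n, exists M : R, forall j, `|y j ord0 a - y j ord0 b| <= M.
Proof.
move=> [h_cont _] sp [M FM] a b.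
have [B hB] := bounded_on_simplex h_cont.
have p_gt0 i : 0 < p ord0 i by case: sp.
have diff_le j c d : y j ord0 c - y j ord0 d <= (M + 2 * B) / p ord0 d.
  rewrite ler_pdivlMr // [_ * p ord0 d]mulrC.
  apply: le_trans (coord_diff_le_fenchel (y j) c d hB sp) _.
  by rewrite lerD2r (le_trans (ler_norm _)).
exists ((M + 2 * B) / p ord0 a + (M + 2 * B) / p ord0 b) => j.
have bound_ge0 c : 0 <= (M + 2 * B) / p ord0 c
  by have := diff_le j c c; rewrite subrr.
rewrite ler_norml; apply/andP; split.
  rewrite lerNl opprB (le_trans (diff_le j b a)) // lerDl; exact: bound_ge0.
by rewrite (le_trans (diff_le j a b)) // lerDr; exact: bound_ge0.
Qed.
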